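(* Let $P$ be a free $\mathbb{Z}_2$-poset, where $\mathbb{Z}_2=\{+1,-1\}$. The compatibility graph $C_P$ is triangle-free if and only if there are no $x,y\in P$ such that $x\preceq y$ and $x\preceq -y$.
   Context: A $\mathbb{Z}_2$-poset is a poset $(P,\preceq)$ with an action of $\mathbb{Z}_2=\{+1,-1\}$ preserving the order ($x\preceq y\Rightarrow -x\preceq -y$); it is free if $-x\neq x$ for all $x$. The compatibility graph $C_P$ of a $G$-poset $P$ is the simple graph with vertex set $P$ in which distinct $x,y$ are adjacent if there is $g\in G\setminus\{e\}$ such that $x$ and $g\cdot y$ are comparable in $P$; for $G=\mathbb{Z}_2$ this means $x$ and $-y$ are comparable. *)

From mathcomp Require Import all_boot all_order.
Set Implicit Arguments. Unset Strict Implicit. Unset Printing Implicit Defensive.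
Import Order.TTheory.
Local Open Scope order_scope.

(* A Z_2-action on a poset T is given by the action of the generator -1,
   an involution [neg]; the action of +1 is the identity. *)
Definition Z2_poset_action (d : Order.disp_t) (T : porderType d) (neg : T -> T) : Prop :=
  involutive neg /\ (forall x y : T, x <= y -> neg x <= neg y).

Definition Z2_free (T : Type) (neg : T -> T) : Prop := forall x, neg x <> x.

(* Adjacency in the compatibility graph C_P: x <> y and x is comparable to g.y
   for some g <> e, i.e. (for G = Z_2) to -y. *)
Definition compat_adj (d : Order.disp_t) (T : porderType d) (neg : T -> T) (x y : T) : Prop :=
  x <> y /\ (x >=< neg y).

Definition compat_triangle_free (d : Order.disp_t) (T : porderType d) (neg : T -> T) : Prop :=
  ~ exists x y z : T,
      compat_adj neg x y /\ compat_adj neg y z /\ compat_adj neg x z.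

From mathcomp Require Import all_boot all_order.
Import Order.TTheory.
Local Open Scope order_scope.

(* Since [-] is a monotone involution, [a <= -b] is equivalent to [-a <= b],
   so distinct [a], [b] are adjacent in C_P iff [a <= -b] or [b <= -a]: a triangle of
   C_P is a tournament on three vertices for the arcs [a -> b := a <= -b].
   Every such tournament has a path [a -> b -> c], which gives [a <= -b <= c];
   the arc between [a] and [c] then yields either [a <= c] and [a <= -c], or
   [a <= a] and [a <= c <= -a].  Conversely, from [x <= y] and [x <= -y] the
   vertices [x], [y], [-y] form a triangle, distinct because the action is free. *)

Section Z2Poset.

Context {d : Order.disp_t} {T : porderType d} {neg : T -> T}.
Hypothesis negK : involutive neg.
Hypothesis neg_mono : {homo neg : x y / x <= y}.

Lemma le_neg2 (x y : T) : (neg x <= neg y) = (x <= y).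
Proof.
by apply/idP/idP => [/neg_mono|/neg_mono //]; rewrite !negK.
Qed.

Lemma le_negr (x y : T) : (x <= neg y) = (neg x <= y).
Proof. by rewrite -le_neg2 negK. Qed.

Lemma comparable_negP (x y : T) : reflect (x <= neg y \/ y <= neg x) (x >=< neg y).
Proof. by rewrite /Order.comparable -(le_neg2 (neg y)) negK; apply: orP. Qed.

Lemma comparable_negC (x y : T) : (x >=< neg y) = (y >=< neg x).
Proof. by apply/comparable_negP/comparable_negP => -[]; auto. Qed.

Lemma le_neg_trans {a b c : T} : a <= neg b -> b <= neg c -> a <= c.
Proof. by move=> ab; rewrite le_negr; apply: le_trans. Qed.

Lemma le_pair_of_neg_path {a b c : T} :
  a <= neg b -> b <= neg c -> a >=< neg c -> exists x y, x <= y /\ x <= neg y.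
Proof.
move=> ab bc /comparable_negP[ac | ca]; have a_le_c := le_neg_trans ab bc.
- by exists a, c.
- by exists a, a; split; [exact: lexx | exact: le_trans ca].
Qed.

Lemma le_pair_of_compat_triangle {x y z : T} :
  compat_adj neg x y -> compat_adj neg y z -> compat_adj neg x z ->
  exists u v, u <= v /\ u <= neg v.
Proof.
move=> [_ exy] [_ eyz] [_ exz].
have eyx : y >=< neg x by rewrite comparable_negC.
have ezy : z >=< neg y by rewrite comparable_negC.
have ezx : z >=< neg x by rewrite comparable_negC.
case/comparable_negP: (exy) => [xy | yx].
- case/comparable_negP: (eyz) => [yz | zy]; first exact: le_pair_of_neg_path xy yz exz.
  case/comparable_negP: (exz) => [xz | zx].
  + exact: le_pair_of_neg_path xz zy exy.
  + exact: le_pair_of_neg_path zx xy ezy.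
- case/comparable_negP: (eyz) => [yz | zy]; last exact: le_pair_of_neg_path zy yx ezx.
  case/comparable_negP: (exz) => [xz | zx].
  + exact: le_pair_of_neg_path yx xz eyz.
  + exact: le_pair_of_neg_path yz zx eyx.
Qed.

Hypothesis neg_free : forall x : T, neg x <> x.

Lemma nle_neg (x : T) : ~ x <= neg x.
Proof.
move=> x_le_nx; apply: (neg_free x); apply/eqP.
by rewrite eq_le x_le_nx andbT -le_negr.
Qed.

Lemma compat_triangle_of_le_pair {x y : T} : x <= y -> x <= neg y ->
  [/\ compat_adj neg x y, compat_adj neg y (neg y) & compat_adj neg x (neg y)].
Proof.
move=> xy xny; split; split.
- by move=> eq_xy; apply: (nle_neg x); rewrite {2}eq_xy.
- by rewrite /Order.comparable xny.
- by move=> /esym; apply: neg_free.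
- by rewrite negK comparablexx.
- by move=> eq_x_ny; apply: (nle_neg (neg y)); rewrite negK -eq_x_ny.
- by rewrite negK /Order.comparable xy.
Qed.

End Z2Poset.

Theorem lemma19 (d : Order.disp_t) (T : porderType d) (neg : T -> T)
  (hact : Z2_poset_action neg) (hfree : Z2_free neg) :
  compat_triangle_free neg <->
  ~ (exists x y : T, x <= y /\ x <= neg y).
Proof.
have [negK neg_mono] := hact.
split.
- move=> tri_free [x [y [xy xny]]]; apply: tri_free.
  have [exy eyny exny] := compat_triangle_of_le_pair negK neg_mono hfree xy xny.
  by exists x, y, (neg y).
- move=> no_pair [x [y [z [exy [eyz exz]]]]]; apply: no_pair.
  exact: (le_pair_of_compat_triangle negK neg_mono exy eyz exz).
Qed.
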